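(* Let $t\in\mathbb{N}$ and $r=3t^2+t+2$. Every graph $G\in\mathcal{X}_t$ that has no clique cutset of size at most $2$ is either complete or contains no clique of size $r$ (i.e. is $K_r$-free).
   Context: All graphs are finite and simple. For graphs $G_1=(V_1,E_1)$, $G_2=(V_2,E_2)$, $G_1\cap G_2=(V_1\cap V_2, E_1\cap E_2)$. For a graph $G=(V,E)$ and an injective map $\alpha$ on $V$, $G^{\alpha}$ has vertex set $\alpha(V)$ and edge set $\{\{\alpha(v),\alpha(w)\}: \{v,w\}\in E\}$. We write $G\xrightarrow{\cap} H$ if $H$ is (isomorphic to) $G^{\alpha_1}\cap\cdots\cap G^{\alpha_k}$ for some $k\ge1$ and injective maps $\alpha_1,\dots,\alpha_k$ on $V(G)$. For a set $M$ of graphs, $\mathrm{SiFree}(M)$ is the class of graphs $G$ such that $G\xrightarrow{\cap}F$ holds for no $F\in M$. For integers $a,b,c\ge1$, $S_{a,b,c}$ is the tree consisting of a vertex of degree $3$ together with three pendant paths having $a$, $b$, $c$ edges respectively; $tS_{t,t,t}$ is the disjoint union of $t$ copies of $S_{t,t,t}$, and $\mathcal{X}_t=\mathrm{SiFree}(\{tS_{t,t,t}\})$. A clique cutset is a (possibly empty) clique $U\subseteq V(G)$ such that $G-U$ is disconnected (so the hypothesis includes that $G$ is connected). *)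

(* Finite simple graphs are given by a finType of vertices
   and a symmetric irreflexive boolean relation (adjacency). *)
From mathcomp Require Import all_boot.
Set Implicit Arguments. Unset Strict Implicit. Unset Printing Implicit Defensive.

(* v lies in the vertex set of G^{al_0} cap ... cap G^{al_k}
   (k+1 maps, all into the common universe nat). *)
Definition inter_vert (T : finType) (k : nat) (al : 'I_k.+1 -> T -> nat)
  (v : nat) : Prop :=
  forall i : 'I_k.+1, exists x : T, al i x = v.

Definition inter_edge (T : finType) (e : rel T) (k : nat)
  (al : 'I_k.+1 -> T -> nat) (v w : nat) : Prop :=
  forall i : 'I_k.+1, exists x y : T, [/\ al i x = v, al i y = w & e x y].

(* G ->cap H : H is isomorphic to an intersection of k >= 1 injective
   images of G. *)
Definition si_to (T : finType) (e : rel T) (T' : finType) (e' : rel T') : Prop :=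
  exists (k : nat) (al : 'I_k.+1 -> T -> nat),
    (forall i, injective (al i)) /\
    exists g : T' -> nat,
      [/\ injective g,
          (forall v, inter_vert al v <-> exists a, g a = v) &
          (forall a b, e' a b <-> inter_edge e al (g a) (g b))].

(* Vertex (c, None): the centre of copy c; vertex (c, Some (j, p)): the vertex
   at distance p+1 from the centre on leg j of copy c (p < t, j < 3).  So each
   copy is S_{t,t,t}: a degree-3 centre with three pendant paths of t edges. *)
Definition tS_vert (t : nat) : finType := ('I_t * option ('I_3 * 'I_t))%type.

Definition S_adj (t : nat) (u v : option ('I_3 * 'I_t)) : bool :=
  match u, v with
  | None, None => false
  | None, Some (_, p) => val p == 0
  | Some (_, p), None => val p == 0
  | Some (j, p), Some (j', p') =>
      (j == j') && ((val p).+1 == val p') || (j == j') && ((val p').+1 == val p)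
  end.

Definition tS_adj (t : nat) : rel (tS_vert t) :=
  fun u v => (u.1 == v.1) && S_adj u.2 v.2.

Definition in_X (t : nat) (T : finType) (e : rel T) : Prop :=
  ~ si_to e (@tS_adj t).

Definition is_clique (T : finType) (e : rel T) (S : {set T}) : Prop :=
  forall x y, x \in S -> y \in S -> x != y -> e x y.

Definition del_rel (T : finType) (e : rel T) (U : {set T}) : rel T :=
  fun x y => [&& e x y, x \notin U & y \notin U].

(* U is a clique cutset: U is a (possibly empty) clique and G - U is
   disconnected, i.e. has two vertices joined by no path in G - U. *)
Definition clique_cutset (T : finType) (e : rel T) (U : {set T}) : Prop :=
  is_clique e U /\
  exists x y, [/\ x \notin U, y \notin U & ~~ connect (del_rel e U) x y].

Definition complete (T : finType) (e : rel T) : Prop :=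
  forall x y : T, x != y -> e x y.

Definition Kr_free (T : finType) (e : rel T) (r : nat) : Prop :=
  ~ exists S : {set T}, #|S| = r /\ is_clique e S.

From mathcomp Require Import all_boot zify.
Set Implicit Arguments. Unset Strict Implicit. Unset Printing Implicit Defensive.

(* Suppose G is neither complete nor K_r-free and let K be a maximum clique, so
   |K| >= r = |V(t S_{t,t,t})| + 2 and some vertex lies outside K.  To get
   G ->cap t S_{t,t,t} it suffices to separate every pair a, b of distinct
   non-adjacent vertices of H = t S_{t,t,t} by an injective homomorphism
   H -> G mapping them to non-adjacent vertices: relabelling one copy of G along
   each such embedding, their intersection is exactly H.  Each embedding places a
   few vertices of H along a path of G and sends all others into K.  The absence
   of clique cutsets of size at most 2 supplies the paths: a vertex z outside K
   with a neighbour w and a non-neighbour x in K, linked to K by a path avoiding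
   w and x (used when a is a leg vertex), and a vertex y outside K with a
   non-neighbour x in K and three disjoint paths into K avoiding x (used when a
   is a centre). *)

Section Embedding.
Variables (H T : finType) (adj : rel H) (e : rel T).

Definition embedding (phi : H -> T) : Prop :=
  injective phi /\ forall u v, adj u v -> e (phi u) (phi v).

Section SeparatingFamily.
Variables (k : nat) (phi : 'I_k.+2 -> H -> T).
Hypotheses (e_irr : irreflexive e) (phi_emb : forall i, embedding (phi i))
  (phi_sep : forall a b, a != b -> ~~ adj a b -> exists i, ~~ e (phi i a) (phi i b)).

(* The i-th copy of G is labelled so that phi i a gets the label of a and every
   vertex outside the image of phi i gets a label private to the index i; with
   at least two copies only the labels of H survive the intersection. *)
Let code (a : H) : nat := enum_rank a.

Definition relabel (i : 'I_k.+2) (x : T) : nat :=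
  if [pick a | phi i a == x] is Some a then code a
  else #|H| + i * #|T| + enum_rank x.

Lemma code_inj : injective code.
Proof. by move=> a b /ord_inj /enum_rank_inj. Qed.

Lemma relabel_phi i a : relabel i (phi i a) = code a.
Proof.
rewrite /relabel; case: pickP => [a' /eqP /(proj1 (phi_emb i)) -> //|/(_ a)].
by rewrite eqxx.
Qed.

Lemma relabel_private i x : (forall a, phi i a != x) ->
  #|H| + i * #|T| <= relabel i x < #|H| + i.+1 * #|T|.
Proof.
rewrite /relabel => hx; case: pickP => [a /eqP ha|_]; first by have := hx a; rewrite ha eqxx.
have : enum_rank x < #|T| := ltn_ord _; nia.
Qed.

Lemma relabel_code i x a : relabel i x = code a -> x = phi i a.
Proof.
case: (pickP (fun a => phi i a == x)) => [a' /eqP <-|hx].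
  by rewrite relabel_phi => /code_inj ->.
have := relabel_private (fun a => negbT (hx a)); have : code a < #|H| := ltn_ord _.
lia.
Qed.

Lemma relabel_inj i : injective (relabel i).
Proof.
move=> x y; case: (pickP (fun a => phi i a == x)) => [a /eqP <-|hx].
  by rewrite relabel_phi => /esym /relabel_code.
case: (pickP (fun a => phi i a == y)) => [b /eqP <-|hy].
  by rewrite relabel_phi => /relabel_code.
rewrite /relabel; case: pickP => [a /eqP ha|_]; first by have := hx a; rewrite ha eqxx.
case: pickP => [b /eqP hb|_]; first by have := hy b; rewrite hb eqxx.
by move/addnI/ord_inj/enum_rank_inj.
Qed.

Lemma si_to_of_separating_family : si_to e adj.
Proof.
have i1 : 1 < k.+2 by [].
exists k.+1, relabel; split; first exact: relabel_inj.
exists code; split; first exact: code_inj.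
- move=> v; split=> [hv|[a <-] i]; last by exists (phi i a); rewrite relabel_phi.
  have [x0 hx0] := hv ord0; have [x1 hx1] := hv (Ordinal i1).
  case: (pickP (fun a => phi ord0 a == x0)) => [a /eqP ha|h0].
    by exists a; rewrite -hx0 -ha relabel_phi.
  case: (pickP (fun a => phi (Ordinal i1) a == x1)) => [a /eqP ha|h1].
    by exists a; rewrite -hx1 -ha relabel_phi.
  have := relabel_private (fun a => negbT (h0 a)).
  have := relabel_private (fun a => negbT (h1 a)).
  rewrite hx0 hx1 /=; lia.
- move=> a b; split=> [hab i|hab].
    exists (phi i a), (phi i b); rewrite !relabel_phi; split=> //.
    exact: (proj2 (phi_emb i)).
  apply/negPn/negP => nab; have [eab|ab] := eqVneq a b; last first.
    have [i /negP[]] := phi_sep ab nab.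
    have [x [y [hx hy exy]]] := hab i.
    by rewrite -(relabel_code hx) -(relabel_code hy).
  subst b; have [x [y [hx hy exy]]] := hab ord0.
  have exy' : x = y by apply: (@relabel_inj ord0); rewrite hx hy.
  by rewrite exy' e_irr in exy.
Qed.

End SeparatingFamily.

Lemma si_to_of_separating_embeddings : irreflexive e ->
  (exists phi, embedding phi) ->
  (forall a b, a != b -> ~~ adj a b ->
     exists2 phi, embedding phi & ~~ e (phi a) (phi b)) ->
  si_to e adj.
Proof.
move=> e_irr [phi0 phi0_emb] sep.
have sep_all (p : H * H) : exists2 phi, embedding phi &
    (p.1 != p.2 -> ~~ adj p.1 p.2 -> ~~ e (phi p.1) (phi p.2)).
  have [/andP [ab nab]|] := boolP ((p.1 != p.2) && ~~ adj p.1 p.2).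
    by have [phi ? ?] := sep _ _ ab nab; exists phi.
  rewrite negb_and !negbK => /orP [/eqP ->|adj_p]; exists phi0 => //; first by rewrite eqxx.
  by rewrite adj_p.
have [F F_emb F_sep] := fin_all_exists2 sep_all.
pose pairs := enum {: H * H}.
pose phi (i : 'I_(#|{: H * H}|.+2)) := oapp F phi0 (onth pairs i).
apply: (@si_to_of_separating_family _ phi) => // [i|a b ab nab].
  by rewrite /phi; case: onth => [p|] //=; apply: F_emb.
have ab_in : (a, b) \in pairs by rewrite mem_enum.
have ab_idx : index (a, b) pairs < #|{: H * H}|.+2.
  by rewrite -addn2 ltn_addr // cardE index_mem.
exists (Ordinal ab_idx); rewrite /phi /=.
case E: onth => [p|]; last by move: (onthTE pairs (index (a, b) pairs)); rewrite E index_mem ab_in.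
by move: (onth_nth (a, b) _ _ _ E); rewrite nth_index // => <-; apply: F_sep.
Qed.

End Embedding.

Lemma inj_into_set (H T : finType) (A : {set H}) (B : {set T}) (b0 : T) :
  #|A| <= #|B| ->
  exists2 f : H -> T, {in A &, injective f} & {in A, forall u, f u \in B}.
Proof.
move=> AB; have idx_lt u : u \in A -> index u (enum A) < size (enum B).
  by move=> uA; rewrite -cardE (leq_trans _ AB) // cardE index_mem mem_enum.
exists (fun u => nth b0 (enum B) (index u (enum A))) => [u v uA vA|u uA].
  move/eqP; rewrite nth_uniq ?enum_uniq ?idx_lt // => /eqP/(congr1 (nth u (enum A))).
  by rewrite !nth_index ?mem_enum.
by rewrite -mem_enum mem_nth ?idx_lt.
Qed.

Section CliqueExtension.
Variables (H T : finType) (adj : rel H) (e : rel T) (K : {set T}).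
Variable f0 : H -> option T.
Hypotheses (adj_sym : symmetric adj) (adj_irr : irreflexive adj)
  (e_sym : symmetric e) (K_clique : is_clique e K) (HK : #|H| <= #|K|).
Hypothesis f0_inj : forall u v a, f0 u = Some a -> f0 v = Some a -> u = v.
Hypothesis f0_closed : forall u v a, adj u v -> f0 u = Some a -> a \notin K ->
  exists2 b, f0 v = Some b & e a b.

(* The vertices left undefined by f0 are sent injectively to unused vertices of
   the clique K; every edge of H then either lies in K or is witnessed by f0. *)
Lemma extend_into_clique (a0 : T) :
  exists2 phi, embedding adj e phi & forall u a, f0 u = Some a -> phi u = a.
Proof.
pose dom := [set u | f0 u != None].
pose img := [set odflt a0 (f0 u) | u in dom].
have imgP u a : f0 u = Some a -> a \in img.
  by move=> fu; apply/imsetP; exists u; rewrite ?inE fu.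
have [g g_inj g_free] : exists2 g : H -> T,
    {in ~: dom &, injective g} & {in ~: dom, forall u, g u \in K :\: img}.
  apply: (inj_into_set a0); rewrite cardsD.
  have := leq_trans (subset_leq_card (subsetIr K img)) (leq_imset_card _ _).
  have := cardsC dom; lia.
pose phi u := if f0 u is Some a then a else g u.
have phi_undef u : f0 u = None -> phi u \in K :\: img.
  by move=> fu; rewrite /phi fu g_free // !inE fu.
have phi_inj : injective phi.
  move=> u v; case fu: (f0 u) => [a|]; case fv: (f0 v) => [b|].
  - by rewrite /phi fu fv => ab; apply: (f0_inj fu); rewrite fv ab.
  - by move=> ab; have := phi_undef v fv; rewrite -ab /phi fu inE (imgP _ _ fu).
  - by move=> ab; have := phi_undef u fu; rewrite ab /phi fv inE (imgP _ _ fv).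
  - by rewrite /phi fu fv; apply: g_inj; rewrite !inE ?fu ?fv.
have phi_outside u : phi u \notin K -> f0 u = Some (phi u).
  by case fu: (f0 u) => [a|] uK; [rewrite /phi fu | move: uK; rewrite (setDP (phi_undef u fu)).1].
exists phi => [|u a fu]; last by rewrite /phi fu.
split=> // u v uv; have [uK|uK] := boolP (phi u \in K); last first.
  by have [b fv] := f0_closed uv (phi_outside u uK) uK; rewrite /phi fv.
have [vK|vK] := boolP (phi v \in K); last first.
  have [b fu] := f0_closed (etrans (adj_sym v u) uv) (phi_outside v vK) vK.
  by rewrite e_sym /phi fu.
by apply: K_clique => //; apply: contraTneq uv => /phi_inj ->; rewrite adj_irr.
Qed.

End CliqueExtension.

Lemma exists_injection (T : finType) (A : {set T}) n : n <= #|A| ->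
  exists2 k : 'I_n -> T, injective k & forall j, k j \in A.
Proof.
move=> nA; exists (fun j => enum_val (widen_ord nA j)); last by move=> j; apply: enum_valP.
by move=> i j /enum_val_inj [] /val_inj.
Qed.

Lemma uniq_seq3 (T : eqType) (y : T) l0 l1 l2 : uniq (y :: l0 ++ l1 ++ l2) ->
  (forall j : 'I_3, uniq (y :: nth [::] [:: l0; l1; l2] j)) /\
  (forall (j j' : 'I_3) v, v \in nth [::] [:: l0; l1; l2] j ->
     v \in nth [::] [:: l0; l1; l2] j' -> j = j').
Proof.
rewrite cons_uniq !mem_cat !negb_or !cat_uniq has_cat negb_or.
case/andP=> /and3P [y0 y1 y2] /and4P [u0 /andP [d01 d02] u1 /andP [d12 u2]].
split; first by case=> [[|[|[|j]]] hj] //=; apply/andP.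
move=> [[|[|[|j]]] hj] [[|[|[|j']]] hj'] v //= v_in v_in';
  first [ exact: val_inj | by case/hasP: d01; exists v
        | by case/hasP: d02; exists v | by case/hasP: d12; exists v ].
Qed.

Section Paths.
Variables (T : eqType) (r : rel T).

Lemma path_crossing_edge (X : pred T) x p : ~~ X x -> path r x p -> X (last x p) ->
  exists z w, [/\ ~~ X z, X w & r z w].
Proof.
elim: p x => [|y p IHp] x /= Xx; first by rewrite (negbTE Xx).
case/andP=> rxy yp; have [Xy _|Xy] := boolP (X y); first by exists x, y.
exact: IHp.
Qed.

Lemma first_hit (X : pred T) x p : X (last x p) ->
  exists2 i, X (last x (take i p)) & forall v, v \in belast x (take i p) -> ~~ X v.
Proof.
elim: p x => [|y p IHp] x /= Xl; first by exists 0.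
have [Xx|Xx] := boolP (X x); first by exists 0.
have [i Xi beli] := IHp y Xl; exists i.+1 => // v.
by rewrite inE => /orP [/eqP ->|/beli].
Qed.

Lemma path_take x p i : path r x p -> path r x (take i p).
Proof. by rewrite -{1}(cat_take_drop i p) cat_path => /andP []. Qed.

Hypothesis r_sym : symmetric r.

Lemma path_rev_belast x p : path r x p ->
  path r (last x p) (rev (belast x p)) /\ last (last x p) (rev (belast x p)) = x.
Proof.
move=> xp; split; first by rewrite rev_path (eq_path (fun a b => r_sym b a)).
by case: p {xp} => //= y p; rewrite rev_cons last_rcons.
Qed.

End Paths.

(* y is the first vertex of a shortest path from c3 to c1 lying on a shortest
   path from c1 to c2. *)
Lemma connect_tripod (T : finType) (r : rel T) c1 c2 c3 : symmetric r ->
  connect r c1 c2 -> connect r c3 c1 ->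
  exists y p1 p2 p3, [/\ path r y p1, path r y p2, path r y p3,
    [/\ last y p1 = c1, last y p2 = c2 & last y p3 = c3] &
    uniq (y :: p1 ++ p2 ++ p3)].
Proof.
move=> r_sym /connectP [p p_path ->] /connectP [q q_path q_last].
case/shortenP: p_path => {}p p_path p_uniq _.
case/shortenP: q_path q_last => {}q q_path q_uniq _ q_last.
have q_hit : last c3 q \in c1 :: p by rewrite -q_last mem_head.
have [i hit before] := first_hit (X := fun v => v \in c1 :: p) q_hit.
move: hit before; set q' := take i q; set y := last c3 q' => y_in before.
have q'_path : path r c3 q' := path_take i q_path.
have q'_uniq : uniq (c3 :: q') by rewrite -[_ :: _]/(take i.+1 (c3 :: q)) take_uniq.
case/splitPl: y_in before p_path p_uniq => s1 s2 s1_last before.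
rewrite cat_path s1_last => /andP [s1_path s2_path] p_uniq.
have [p1_path p1_last] := path_rev_belast r_sym s1_path.
have [p3_path p3_last] := path_rev_belast r_sym q'_path.
rewrite s1_last -/y in p1_path p1_last.
exists y, (rev (belast c1 s1)), s2, (rev (belast c3 q')); split=> //.
  by rewrite last_cat s1_last.
have perm_c1s : perm_eq (y :: rev (belast c1 s1) ++ s2) (c1 :: s1 ++ s2).
  rewrite -cat1s perm_catCA /= -cat_cons (lastI c1 s1) s1_last cat_rcons.
  by rewrite perm_cat2r perm_rev.
rewrite -cat_cons catA cat_uniq (perm_uniq perm_c1s) p_uniq /=.
rewrite rev_uniq; move: q'_uniq; rewrite lastI rcons_uniq => /andP [_ ->].
rewrite andbT; apply/hasPn => v; rewrite mem_rev (perm_mem perm_c1s).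
exact: before.
Qed.

Lemma path_nth_edge (T : Type) (r : rel T) x s i : path r x s -> i < size s ->
  r (nth x (x :: s) i) (nth x (x :: s) i.+1).
Proof. by move/(pathP x)/(_ i). Qed.

Lemma nth_lt_size_notin (T : finType) (K : {set T}) (y : T) s i :
  i <= size s -> nth y (y :: s) i \notin K -> last y s \in K -> i < size s.
Proof.
rewrite leq_eqVlt => /orP [/eqP ->|//].
by rewrite -[size s]/((size (y :: s)).-1) nth_last => /negbTE ->.
Qed.

Record detour (T : finType) (e : rel T) (K : {set T}) (z w x : T) (P : seq T) :
  Prop := Detour {
  detour_uniq : uniq [:: x, w, z & P];
  detour_path : path e w (z :: P);
  detour_last : last z P \in K;
  detour_start : w \in K;
  detour_avoid : x \in K;
  detour_nonadj : ~~ e z x }.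

Record tripod (T : finType) (e : rel T) (K : {set T}) (y x : T) (L : 'I_3 -> seq T) :
  Prop := Tripod {
  tripod_avoid : x \in K;
  tripod_nonadj : ~~ e y x;
  tripod_path : forall j, path e y (L j);
  tripod_last : forall j, last y (L j) \in K;
  tripod_uniq : forall j, uniq [:: x, y & L j];
  tripod_disjoint : forall j j' v, v \in L j -> v \in L j' -> j = j' }.

Section StarForest.
Variable t : nat.
Notation V := (tS_vert t).
Notation adj := (@tS_adj t).

Lemma card_tS_vert : #|V| = 3 * t ^ 2 + t.
Proof. by rewrite card_prod card_option card_prod !card_ord; lia. Qed.

Definition depth (v : V) : nat := if v.2 is Some (_, q) then q.+1 else 0.

Definition leg (v : V) : 'I_3 := if v.2 is Some (j, _) then j else ord0.

Definition on_ray (c : 'I_t) (j : 'I_3) (v : V) : bool :=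
  (v.1 == c) && ((depth v == 0) || (leg v == j)).

Lemma on_ray_leg v : on_ray v.1 (leg v) v.
Proof. by rewrite /on_ray !eqxx orbT. Qed.

Lemma on_ray_centre c j v : v.1 = c -> depth v = 0 -> on_ray c j v.
Proof. by rewrite /on_ray => -> ->; rewrite eqxx. Qed.

Lemma ray_inj c j u v : on_ray c j u -> on_ray c j v -> depth u = depth v -> u = v.
Proof.
case: u v => [cu [[ju qu]|]] [cv [[jv qv]|]];
  rewrite /on_ray /leg /depth /= => /andP [/eqP -> /eqP hu] /andP [/eqP -> /eqP hv] // [/val_inj].
by rewrite hu hv => ->.
Qed.

Lemma tS_adj_ray c j u v : on_ray c j u -> on_ray c j v ->
  adj u v = ((depth u).+1 == depth v) || ((depth v).+1 == depth u).
Proof.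
case: u v => [cu [[ju qu]|]] [cv [[jv qv]|]];
  rewrite /on_ray /tS_adj /leg /depth /= => /andP [/eqP -> hu] /andP [/eqP -> hv];
  rewrite eqxx //= ?eqSS ?orbF 1?eq_sym //.
by rewrite (eqP hu) (eqP hv) eqxx.
Qed.

Lemma tS_adj_copy u v : adj u v -> u.1 = v.1.
Proof. by case/andP=> /eqP. Qed.

Lemma tS_adj_depth_pos u v : adj u v -> (0 < depth u) || (0 < depth v).
Proof. by case: u v => [cu [[ju qu]|]] [cv [[jv qv]|]]; rewrite /tS_adj /= ?andbF. Qed.

Lemma tS_adj_leg u v : adj u v -> 0 < depth u -> 0 < depth v -> leg u = leg v.
Proof.
by case: u v => [cu [[ju qu]|]] [cv [[jv qv]|]] //; case/andP=> _ /orP [] /andP [/eqP ->].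
Qed.

Lemma tS_adj_on_ray c j u v : on_ray c j u -> 0 < depth u -> adj u v -> on_ray c j v.
Proof.
case/andP=> /eqP uc /orP [/eqP -> //|/eqP uj] du uv.
rewrite /on_ray -(tS_adj_copy uv) uc eqxx /=; case: posnP => //= dv.
by rewrite -(tS_adj_leg uv) // uj.
Qed.

Lemma tS_adj_sym : symmetric adj.
Proof.
move=> [c [[j p]|]] [c' [[j' p']|]]; rewrite /tS_adj /= ?(eq_sym c) //.
by rewrite (eq_sym j) orbC.
Qed.

Lemma tS_adj_irr : irreflexive adj.
Proof. by move=> v; rewrite (tS_adj_ray (on_ray_leg v) (on_ray_leg v)) eqn_leq ltnn. Qed.

Section Separation.
Variables (T : finType) (e : rel T) (K : {set T}).
Hypotheses (e_sym : symmetric e) (K_clique : is_clique e K) (HK : #|V| <= #|K|).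

Lemma trivial_embedding (a0 : T) : exists phi, embedding adj e phi.
Proof.
have [phi phi_emb _] := @extend_into_clique _ _ adj e K (fun _ => None) tS_adj_sym
  tS_adj_irr e_sym K_clique HK (fun _ _ _ f0u => match f0u with end)
  (fun _ _ _ _ f0u => match f0u with end) a0.
by exists phi.
Qed.

Section CentreSeparation.
Variables (y x : T) (L : 'I_3 -> seq T).
Hypotheses (xK : x \in K) (nyx : ~~ e y x)
  (L_path : forall j, path e y (L j)) (L_last : forall j, last y (L j) \in K)
  (L_uniq : forall j, uniq [:: x, y & L j])
  (L_disj : forall j j' v, v \in L j -> v \in L j' -> j = j').
Variables (a b : V).
Hypotheses (a_centre : depth a = 0) (b_copy : b.1 != a.1).

(* The copy of the centre a is laid along the tripod y, L: the vertex of
   depth d on leg j goes to the d-th vertex of y :: L j. *)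
Let placed (v : V) := depth v <= size (L (leg v)).
Let spot (v : V) := nth y (y :: L (leg v)) (depth v).
Let f0 (v : V) : option T :=
  if v == b then Some x else if (v.1 == a.1) && placed v then Some (spot v) else None.

Lemma centre_placed_ray c j v : on_ray c j v -> placed v = (depth v <= size (L j)).
Proof. by case/andP=> _ /orP [/eqP dv|/eqP <-]; rewrite /placed ?dv. Qed.

Lemma centre_spot_ray c j v : on_ray c j v -> spot v = nth y (y :: L j) (depth v).
Proof. by case/andP=> _ /orP [/eqP dv|/eqP <-]; rewrite /spot ?dv. Qed.

Lemma centre_spot_leg v : 0 < depth v -> placed v -> spot v \in L (leg v).
Proof. by rewrite /spot /placed; case: (depth v) => // d _ /(mem_nth y). Qed.

Lemma centre_spot_inj u v : u.1 = v.1 -> placed u -> placed v -> spot u = spot v -> u = v.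
Proof.
move=> uv pu pv; have [du0|du] := posnP (depth u); have [dv0|dv] := posnP (depth v).
- by move=> _; apply: (@ray_inj u.1 ord0); rewrite ?on_ray_centre ?du0 ?dv0.
- move=> suv; have := centre_spot_leg dv pv; rewrite -suv /spot du0 => yL.
  by have := L_uniq (leg v); rewrite /= !inE yL !andbF.
- move=> suv; have := centre_spot_leg du pu; rewrite suv /spot dv0 => yL.
  by have := L_uniq (leg u); rewrite /= !inE yL !andbF.
have lu := centre_spot_leg du pu; have lv := centre_spot_leg dv pv => suv.
have juv : leg u = leg v by apply: (L_disj lu); rewrite suv.
have rv : on_ray u.1 (leg u) v by rewrite /on_ray uv juv !eqxx orbT.
apply: (ray_inj (on_ray_leg u) rv).
move: suv pu pv; rewrite /spot /placed juv; have := L_uniq (leg v); case/and3P=> _ _ uL.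
move: (depth u) (depth v) du dv => [//|m] [//|n] _ _ /= /eqP + pm pn.
by rewrite nth_uniq // => /eqP ->.
Qed.

Lemma centre_spot_neq_x v : placed v -> spot v != x.
Proof.
move=> pv; have /andP [xyL _] := L_uniq (leg v).
by apply: contraNneq xyL => <-; apply: mem_nth.
Qed.

Lemma centre_f0_inj u v s : f0 u = Some s -> f0 v = Some s -> u = v.
Proof.
rewrite /f0; case: (eqVneq u b) => [-> [<-]|_]; case: (eqVneq v b) => [-> //|_].
- by case: ifP => // /andP [_ pv] [xv]; have := centre_spot_neq_x pv; rewrite -xv eqxx.
- by case: ifP => // /andP [_ pu] [<-] [ux]; have := centre_spot_neq_x pu; rewrite ux eqxx.
case: ifP => // /andP [/eqP ua pu] [<-]; case: ifP => // /andP [/eqP va pv] [].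
by move/esym; apply: centre_spot_inj; rewrite ?ua ?va.
Qed.

Lemma centre_f0_closed u v s : adj u v -> f0 u = Some s -> s \notin K ->
  exists2 s', f0 v = Some s' & e s s'.
Proof.
move=> uv; rewrite /f0; case: (eqVneq u b) => [_ [<-]|_]; first by rewrite xK.
case: ifP => // /andP [/eqP ua pu] [<-] sK.
have va : v.1 = a.1 by rewrite -(tS_adj_copy uv).
have vb : v != b by apply: contraNneq b_copy => <-; rewrite va.
pose j := if 0 < depth u then leg u else leg v.
have [ru rv] : on_ray u.1 j u /\ on_ray u.1 j v.
  rewrite /j; case: posnP => [du0|du].
    have := tS_adj_depth_pos uv; rewrite du0 /= => dv.
    by rewrite on_ray_centre // (tS_adj_copy uv) on_ray_leg.
  by rewrite on_ray_leg (tS_adj_on_ray (on_ray_leg u)).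
rewrite (centre_placed_ray ru) in pu; rewrite (negbTE vb) va eqxx (centre_placed_ray rv) /=.
rewrite (centre_spot_ray ru) (centre_spot_ray rv) in sK *; rewrite (tS_adj_ray ru rv) in uv.
have lt := nth_lt_size_notin pu sK (L_last j).
case/orP: uv => /eqP dv.
- by rewrite -dv lt; eexists; last exact: path_nth_edge.
- have le : depth v < size (L j) by rewrite dv.
  by rewrite ltnW //; eexists; last by rewrite e_sym -dv; apply: path_nth_edge.
Qed.

Lemma centre_separation : exists2 phi, embedding adj e phi & ~~ e (phi a) (phi b).
Proof.
have [phi phi_emb phi_f0] := extend_into_clique tS_adj_sym tS_adj_irr e_sym K_clique HK
  centre_f0_inj centre_f0_closed x.
have ab : a != b by apply: contraNneq b_copy => <-.
exists phi => //; have -> : phi a = y.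
  by apply: phi_f0; rewrite /f0 (negbTE ab) eqxx /placed /spot a_centre.
by rewrite (phi_f0 b x) // /f0 eqxx.
Qed.

End CentreSeparation.

Section LegSeparation.
Variables (z w x : T) (P : seq T).
Hypotheses (xwzP_uniq : uniq [:: x, w, z & P]) (wzP_path : path e w (z :: P))
  (P_last : last z P \in K) (wK : w \in K) (xK : x \in K) (nzx : ~~ e z x).
Variables (a o : V).
Hypotheses (a_leg : 0 < depth a) (oa : o != a) (nao : ~~ adj a o)
  (o_not_later : ~~ (on_ray a.1 (leg a) o && (depth a < depth o))).

(* The path w, z, P is laid along the ray of a, starting with w at the
   predecessor of a, so that a goes to z. *)
Let d0 := (depth a).-1.
Let W := w :: z :: P.
Let placed (v : V) :=
  on_ray a.1 (leg a) v && (d0 <= depth v <= d0 + size (z :: P)).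
Let spot (v : V) := nth w W (depth v - d0).
Let f0 (v : V) : option T :=
  if v == o then Some x else if placed v then Some (spot v) else None.

Lemma leg_o_unplaced : ~~ placed o.
Proof.
apply/negP => /andP [ro /andP [d0o _]]; move: d0o; rewrite leq_eqVlt => /orP [/eqP d0o|].
  by move: nao; rewrite (tS_adj_ray (on_ray_leg a) ro) -d0o prednK ?eqxx ?orbT.
rewrite prednK // leq_eqVlt => /orP [/eqP ao|ao].
  by move: oa; rewrite (ray_inj (on_ray_leg a) ro ao) eqxx.
by move: o_not_later; rewrite ro ao.
Qed.

Lemma leg_spot_inj u v : placed u -> placed v -> spot u = spot v -> u = v.
Proof.
case/andP=> ru /andP [u0 u1] /andP [rv /andP [v0 v1]] /eqP.
have := xwzP_uniq; rewrite [uniq _]/= => /andP [_ uW].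
rewrite nth_uniq ?ltnS ?leq_subLR // => /eqP duv.
by apply: (ray_inj ru rv); rewrite -(subnK u0) -(subnK v0) duv.
Qed.

Lemma leg_spot_neq_x v : placed v -> spot v != x.
Proof.
case/andP=> _ /andP [_ v1]; have /andP [xW _] := xwzP_uniq.
by apply: contraNneq xW => <-; apply: mem_nth; rewrite ltnS leq_subLR.
Qed.

Lemma leg_f0_inj u v s : f0 u = Some s -> f0 v = Some s -> u = v.
Proof.
rewrite /f0; case: (eqVneq u o) => [-> [<-]|_]; case: (eqVneq v o) => [-> //|_].
- by case: ifP => // pv [xv]; have := leg_spot_neq_x pv; rewrite -xv eqxx.
- by case: ifP => // pu [<-] [ux]; have := leg_spot_neq_x pu; rewrite ux eqxx.
by case: ifP => // pu [<-]; case: ifP => // pv [] /esym; apply: leg_spot_inj.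
Qed.

Lemma leg_f0_closed u v s : adj u v -> f0 u = Some s -> s \notin K ->
  exists2 s', f0 v = Some s' & e s s'.
Proof.
move=> uv; rewrite /f0; case: (eqVneq u o) => [_ [<-]|_]; first by rewrite xK.
case: ifP => // pu [<-] sK; have /andP [ru /andP [u0 u1]] := pu.
have u0' : d0 < depth u.
  by rewrite ltn_neqAle u0 andbT; apply: contraNneq sK => du; rewrite /spot -du subnn.
have lt : depth u - d0 < size (z :: P).
  by apply: (@nth_lt_size_notin _ K w (z :: P)) => //; rewrite leq_subLR.
have rv := tS_adj_on_ray ru (leq_ltn_trans (leq0n _) u0') uv.
rewrite (tS_adj_ray ru rv) in uv.
have pv : placed v.
  rewrite /placed rv /=; case/orP: uv => /eqP dv.
  - by rewrite -dv leqW //= -ltn_subLR.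
  - by rewrite -ltnS dv u0' /= ltnW // dv.
have d0v : d0 <= depth v by case/andP: pv => _ /andP [].
rewrite ifN_eq ?pv; last by apply: contraNneq leg_o_unplaced => <-.
eexists; first by [].
case/orP: uv => /eqP duv; rewrite /spot /W -duv.
- by rewrite subSn //; apply: (path_nth_edge wzP_path).
- rewrite e_sym subSn //; apply: (path_nth_edge wzP_path).
  by move: lt; rewrite -duv subSn // => /ltnW.
Qed.

Lemma leg_separation : exists2 phi, embedding adj e phi & ~~ e (phi a) (phi o).
Proof.
have [phi phi_emb phi_f0] := extend_into_clique tS_adj_sym tS_adj_irr e_sym K_clique HK
  leg_f0_inj leg_f0_closed x.
exists phi => //; have -> : phi o = x by apply: phi_f0; rewrite /f0 eqxx.
suff -> : phi a = z by [].
have pa : placed a.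
  by rewrite /placed on_ray_leg leq_pred /= addnS -addSn prednK // leq_addr.
apply: phi_f0; rewrite /f0 eq_sym (negbTE oa) pa /spot /d0.
by case: (depth a) a_leg => // n _; rewrite subSnn.
Qed.

End LegSeparation.

Lemma separating_embedding y x L z w x' P : tripod e K y x L -> detour e K z w x' P ->
  forall a b, a != b -> ~~ adj a b ->
  exists2 phi, embedding adj e phi & ~~ e (phi a) (phi b).
Proof.
case=> xK nyx L_path L_last L_uniq L_disj [wzP_uniq wzP_path P_last wK xK' nzx].
have leg_sep := leg_separation wzP_uniq wzP_path P_last wK xK' nzx.
have centre_sep := centre_separation xK nyx L_path L_last L_uniq L_disj.
have swap a b : (exists2 phi, embedding adj e phi & ~~ e (phi b) (phi a)) ->
    exists2 phi, embedding adj e phi & ~~ e (phi a) (phi b).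
  by case=> phi phi_emb nba; exists phi; rewrite // e_sym.
move=> a b ab nab; have [da0|da] := posnP (depth a).
  have [ba|ba] := eqVneq b.1 a.1; last exact: (centre_sep a b da0 ba).
  have db : 0 < depth b.
    rewrite lt0n; apply: contra_neq ab => db0.
    have ra : on_ray a.1 ord0 a by rewrite on_ray_centre.
    by apply: (ray_inj ra (on_ray_centre ord0 ba db0)); rewrite da0 db0.
  by apply/swap/(leg_sep b a db ab); rewrite ?da0 ?andbF // tS_adj_sym.
have [later|not_later] := boolP (on_ray a.1 (leg a) b && (depth a < depth b)).
  have [_ ab_depth] := andP later.
  apply/swap/(leg_sep b a (leq_ltn_trans (leq0n _) ab_depth) ab); first by rewrite tS_adj_sym.
  by rewrite ltnNge ltnW ?andbF.
by apply: (leg_sep a b da); rewrite // eq_sym.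
Qed.

End Separation.
End StarForest.

Section Cliques.
Variables (T : finType) (e : rel T).

Lemma clique_subset (A B : {set T}) : A \subset B -> is_clique e B -> is_clique e A.
Proof. by move=> /subsetP AB B_clique a b /AB aB /AB bB; apply: B_clique. Qed.

Hypothesis e_sym : symmetric e.

Definition cliqueb (A : {set T}) := [forall x in A, forall y in A, (x != y) ==> e x y].

Lemma cliqueP (A : {set T}) : reflect (is_clique e A) (cliqueb A).
Proof.
apply: (iffP forall_inP) => [A_cl x y xA yA xy|A_cl x xA].
  by move/forall_inP: (A_cl x xA) => /(_ y yA) /implyP; apply.
by apply/forall_inP => y yA; apply/implyP; apply: A_cl.
Qed.

Lemma exists_maximum_clique (S : {set T}) : is_clique e S ->
  exists2 K : {set T}, is_clique e K &
    #|S| <= #|K| /\ forall v, v \notin K -> exists2 k, k \in K & ~~ e v k.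
Proof.
move/cliqueP=> S_cl; case: (@arg_maxnP _ S cliqueb (fun A => #|A|) S_cl) => K /cliqueP K_cl K_max.
exists K => //; split=> [|v vK]; first exact: K_max.
case: (boolP [exists k in K, ~~ e v k]) => [/exists_inP //|/negP no_k].
have v_adj k : k \in K -> e v k.
  by move=> kK; apply/negPn/negP => nvk; apply: no_k; apply/existsP; exists k; rewrite kK.
have /K_max : cliqueb (v |: K).
  apply/cliqueP => a b; rewrite !inE => /orP [/eqP ->|aK] /orP [/eqP ->|bK];
    rewrite ?eqxx // => ab; [exact: v_adj|rewrite e_sym; exact: v_adj|exact: K_cl].
by rewrite /= cardsU1 vK add1n ltnn.
Qed.

End Cliques.

Section CliqueCutsets.
Variables (T : finType) (e : rel T) (K : {set T}).
Hypotheses (e_sym : symmetric e) (K_clique : is_clique e K)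
  (K_max : forall v, v \notin K -> exists2 k, k \in K & ~~ e v k)
  (K_big : 6 <= #|K|)
  (no_cut : forall U : {set T}, #|U| <= 2 -> ~ clique_cutset e U).

Lemma del_rel_sub (U : {set T}) : subrel (del_rel e U) e.
Proof. by move=> a b /and3P []. Qed.

Lemma del_rel_sym (U : {set T}) : symmetric (del_rel e U).
Proof. by move=> a b; rewrite /del_rel e_sym (andbC (a \notin U)). Qed.

Lemma path_del_notin (U : {set T}) x p : path (del_rel e U) x p -> all [pred v | v \notin U] p.
Proof. by elim: p x => //= y p IHp x /andP [/and3P [_ _ ->] /IHp]. Qed.

Lemma connect_del_small_clique (U : {set T}) x y : #|U| <= 2 -> is_clique e U ->
  x \notin U -> y \notin U -> connect (del_rel e U) x y.
Proof.
move=> U2 U_clique xU yU; apply/negPn/negP => nxy.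
by apply: (no_cut U2); split=> //; exists x, y.
Qed.

Lemma exists_detour z0 : z0 \notin K -> exists z w x P, detour e K z w x P.
Proof.
move=> z0K; have [k0 k0K] : exists k0, k0 \in K.
  by apply/card_gt0P; apply: leq_trans K_big.
have [z [w [zK wK ezw]]] : exists z w, [/\ z \notin K, w \in K & e z w].
  have /connectP [p p_path p_last] : connect (del_rel e set0) z0 k0.
    by apply: connect_del_small_clique; rewrite ?cards0 ?inE // => ? ?; rewrite inE.
  apply: (path_crossing_edge (X := fun v => v \in K) z0K (sub_path (@del_rel_sub _) p_path)).
  by rewrite -p_last.
have [x xK nzx] := K_max zK.
have xw : x != w by apply: contraNneq nzx => ->.
pose U := [set w; x].
have U2 : #|U| <= 2 by rewrite cards2; case: (w != x).
have [k kK kU] : exists2 k, k \in K & k \notin U.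
  apply/subsetPn; apply: contraTN K_big => /subset_leq_card KU.
  by rewrite -ltnNge (leq_ltn_trans KU) // (leq_ltn_trans U2).
have U_sub : U \subset K by rewrite subUset !sub1set wK xK.
have zU : z \notin U by apply: contra zK => /(subsetP U_sub).
have /connectP [p p_path p_last] :=
  connect_del_small_clique U2 (clique_subset U_sub K_clique) zU kU.
case/shortenP: p_path p_last => P P_path zP_uniq _ P_last.
have P_notU := path_del_notin P_path.
have notin_zP v : v \in U -> v \notin z :: P.
  by move=> vU; rewrite inE negb_or; apply/andP; split;
    [apply: contraTneq vU => ->|apply/negP => /(allP P_notU) /negP].
exists z, w, x, P; split=> //; last by rewrite -P_last.
- rewrite 2!cons_uniq zP_uniq andbT inE negb_or xw.
  by rewrite !notin_zP // !inE eqxx ?orbT.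
- by rewrite /= e_sym ezw (sub_path (@del_rel_sub U) P_path).
Qed.

Definition attachments z0 : {set T} :=
  [set k in K | [exists c, connect (del_rel e K) z0 c && e c k]].

(* A path from z0 avoiding the attachments can never enter K, so with at most
   two attachments they would form a clique cutset separating z0 from K. *)
Lemma attachments_gt2 z0 : z0 \notin K -> 2 < #|attachments z0|.
Proof.
move=> z0K; rewrite ltnNge; apply/negP => A2; set A := attachments z0 in A2.
have AK : A \subset K by apply/subsetP => v; rewrite inE => /andP [].
have [k kK kA] : exists2 k, k \in K & k \notin A.
  apply/subsetPn; apply: contraTN K_big => /subset_leq_card KA.
  by rewrite -ltnNge (leq_ltn_trans KA) // (leq_ltn_trans A2).
have z0A : z0 \notin A by apply: contra z0K => /(subsetP AK).
have /connectP [p p_path k_last] :=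
  connect_del_small_clique A2 (clique_subset AK K_clique) z0A kA.
have stay v q : connect (del_rel e K) z0 v -> v \notin K ->
    path (del_rel e A) v q -> last v q \notin K.
  elim: q v => // a q IHq v z0v vK /andP [/and3P [eva _ aA] aq].
  have aK : a \notin K.
    apply: contra aA => aK; rewrite inE aK; apply/existsP; exists v; rewrite z0v.
    exact: eva.
  apply: IHq aq => //; apply: connect_trans z0v (connect1 _).
  by rewrite /del_rel eva vK.
by move: kK; rewrite k_last (negbTE (stay _ _ (connect0 _ _) z0K p_path)).
Qed.

Lemma tripod_of_legs y x (p : 'I_3 -> seq T) (k : 'I_3 -> T) :
  x \in K -> ~~ e y x -> y \notin K ->
  (forall j, all [pred v | v \notin K] (p j)) -> (forall j, uniq (y :: p j)) ->
  (forall j j' v, v \in p j -> v \in p j' -> j = j') ->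
  injective k -> (forall j, k j \in K) -> (forall j, k j != x) ->
  (forall j, path e y (rcons (p j) (k j))) ->
  tripod e K y x (fun j => rcons (p j) (k j)).
Proof.
move=> xK nyx yK pK p_uniq p_disj k_inj kK kx p_path.
have notin_p v j : v \in K -> v \notin p j.
  by move=> vK; apply/negP => /(allP (pK j)); rewrite /= vK.
have yx : y != x by apply: contraNneq yK => ->.
split=> // [j|j|j j' v]; first by rewrite last_rcons.
  have := p_uniq j; rewrite cons_uniq => /andP [yp up].
  rewrite 2!cons_uniq rcons_uniq up notin_p // !inE !mem_rcons !inE !negb_or.
  rewrite eq_sym yx eq_sym kx notin_p // yp !andbT.
  by apply: contraNneq yK => ->.
rewrite !mem_rcons !inE => /orP [/eqP ->|vp] /orP [/eqP|vp'].
- exact: k_inj.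
- by move: vp'; rewrite (negbTE (notin_p _ j' (kK j))).
- by move=> vk; move: vp; rewrite vk (negbTE (notin_p _ j (kK j'))).
- exact: p_disj vp vp'.
Qed.

Lemma attachment_legs z0 : z0 \notin K ->
  exists y (k : 'I_3 -> T) (p : 'I_3 -> seq T),
    [/\ y \notin K, injective k, forall j, k j \in K,
        forall j, all [pred v | v \notin K] (p j) &
        [/\ forall j, uniq (y :: p j), forall j j' v, v \in p j -> v \in p j' -> j = j'
          & forall j, path e y (rcons (p j) (k j))]].
Proof.
move=> z0K; pose r := del_rel e K; have r_sym : symmetric r := del_rel_sym K.
have [k k_inj kA] := exists_injection (attachments_gt2 z0K).
have kK j : k j \in K by have := kA j; rewrite inE => /andP [].
have c_ex j : exists2 c, connect r z0 c & e c (k j).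
  by have := kA j; rewrite inE => /andP [_ /existsP [c /andP [z0c eck]]]; exists c.
have [c z0c eck] := fin_all_exists2 c_ex.
have cc i j : connect r (c i) (c j).
  by apply: connect_trans (z0c j); rewrite (sym_connect_sym r_sym) z0c.
have [y [p1 [p2 [p3 [p1_path p2_path p3_path [p1_last p2_last p3_last] ys_uniq]]]]] :=
  connect_tripod r_sym (cc ord0 (@Ordinal 3 1 isT)) (cc (@Ordinal 3 2 isT) ord0).
pose p (j : 'I_3) := nth [::] [:: p1; p2; p3] j.
have [p_uniq p_disj] := uniq_seq3 ys_uniq.
have p_ends (j : 'I_3) : path r y (p j) /\ last y (p j) = c j.
  case: j => [[|[|[|j]]] hj] //=; rewrite ?p1_last ?p2_last ?p3_last;
    by split=> //; congr c; apply: val_inj.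
exists y, k, p; split=> // [|j|]; last split=> // j.
- have /connectP [q /path_del_notin q_notK ->] : connect r z0 y.
    apply: connect_trans (z0c ord0) _; rewrite (sym_connect_sym r_sym).
    by have [py <-] := p_ends ord0; apply/connectP; exists (p ord0).
  by have := mem_last z0 q; rewrite inE => /orP [/eqP ->|/(allP q_notK)].
- exact: path_del_notin (p_ends j).1.
have [pj_path pj_last] := p_ends j.
by rewrite rcons_path pj_last eck (sub_path (@del_rel_sub K) pj_path).
Qed.

(* If some non-neighbour x of y in K avoids the ends of the legs we are done;
   otherwise y sees all of K but three vertices, and three one-edge legs
   suffice. *)
Lemma exists_tripod z0 : z0 \notin K -> exists y x L, tripod e K y x L.
Proof.
move=> z0K; have [y [k [p [yK k_inj kK pK [p_uniq p_disj p_path]]]]] := attachment_legs z0K.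
pose ends := [set k j | j in 'I_3].
case: (boolP [exists x in K, (x \notin ends) && ~~ e y x]).
  case/exists_inP=> x xK /andP [xk nyx]; exists y, x, (fun j => rcons (p j) (k j)).
  by apply: tripod_of_legs => // j; apply: contraNneq xk => <-; apply: imset_f.
move=> /exists_inP no_x; have [x xK nyx] := K_max yK.
have x_end : x \in ends by apply/negPn/negP => xk; apply: no_x; exists x; rewrite ?xk.
have [m m_inj mK] : exists2 m : 'I_3 -> T, injective m & forall j, m j \in K :\: ends.
  apply: exists_injection; rewrite cardsD.
  have : #|K :&: ends| <= 3.
    apply: leq_trans (subset_leq_card (subsetIr _ _)) _.
    by rewrite (leq_trans (leq_imset_card _ _)) ?card_ord.
  by move: K_big; lia.
exists y, x, (fun j => rcons [::] (m j)); apply: tripod_of_legs => // j.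
- by case/setDP: (mK j).
- by case/setDP: (mK j) => _; apply: contraNneq => ->.
- case/setDP: (mK j) => mjK mj_end /=; rewrite andbT; apply/negPn/negP => nym.
  by apply: no_x; exists (m j); rewrite ?mj_end.
Qed.

End CliqueCutsets.

Theorem mainTheorem8 (t : nat) (T : finType) (e : rel T)
  (e_sym : symmetric e) (e_irr : irreflexive e) :
  in_X t e ->
  (forall U : {set T}, #|U| <= 2 -> ~ clique_cutset e U) ->
  complete e \/ Kr_free e (3 * t ^ 2 + t + 2).
Proof.
move=> X_t no_cut; case: t X_t => [|t] X_t.
  right=> _; apply: X_t; have no_vertex (a : tS_vert 0) : False by case: a => [[]].
  apply: (si_to_of_separating_embeddings e_irr) => [|a]; last by case: (no_vertex a).
  by exists (fun a => match no_vertex a with end); split=> a; case: (no_vertex a).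
have [compl|ncompl] := boolP (cliqueb e [set: T]).
  by left=> x y; move/cliqueP: compl; apply; rewrite inE.
right=> -[S [S_card S_clique]]; apply: X_t.
have [K K_clique [SK K_max]] := exists_maximum_clique e_sym S_clique.
have [z0 z0K] : exists z0, z0 \notin K.
  apply/existsP; apply: contraNT ncompl => /existsPn inK; apply/cliqueP.
  by apply: clique_subset K_clique; apply/subsetP => v _; apply/negPn/inK.
have HK : #|tS_vert t.+1| + 2 <= #|K| by rewrite card_tS_vert -S_card.
have K_big : 6 <= #|K| by apply: leq_trans HK; rewrite card_tS_vert; lia.
have HK' := leq_trans (leq_addr 2 _) HK.
have [z [w [x [P dtr]]]] := exists_detour e_sym K_clique K_max K_big no_cut z0K.
have [y [x' [L tri]]] := exists_tripod e_sym K_clique K_max K_big no_cut z0K.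
apply: (si_to_of_separating_embeddings e_irr); first exact: trivial_embedding e_sym K_clique HK' x.
exact: (separating_embedding e_sym K_clique HK' tri dtr).
Qed.
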